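(* Let $\Gamma$ be a gain operator on $\ell^\infty_+(\mathcal I)$. If $\Sigma(\Gamma)$ is GATT, then $\Gamma$ satisfies the uniform NJI condition.
   Context: Let $\mathcal I$ be a nonempty countable index set; $\ell^\infty_+(\mathcal I)$ is the cone of nonnegative real families $s=(s_i)_{i\in\mathcal I}$ with $\|s\|:=\sup_i|s_i|<\infty$, ordered componentwise. $\mathcal K_\infty$: continuous strictly increasing unbounded $\gamma:\mathbb R_+\to\mathbb R_+$ with $\gamma(0)=0$. For $\mathcal J\subset\mathcal I$, $s_{|\mathcal J}$ agrees with $s$ on $\mathcal J$ and is $0$ elsewhere. Gain operator: for each $i$ a finite (possibly empty) $\mathcal I_i\subset\mathcal I\setminus\{i\}$; directed graph $\mathcal G$ with vertices $\mathcal I$ and edges $ji$, $j\in\mathcal I_i$; a pointwise equicontinuous family $\gamma_{ij}\in\mathcal K_\infty$ ($ji\in E(\mathcal G)$); functions $\mu_i:\ell^\infty_+(\mathcal I)\to[0,\infty]$ with (M1) some $\xi\in\mathcal K_\infty$ has $\mu_i(0)=0$, $\mu_i(s)\ge\xi(\|s\|)$; (M2) $\mu_i$ monotone; (M3) for each finite $\mathcal J$, $\mu_i$ restricted to vectors vanishing off $\mathcal J$ is finite-valued and continuous; (M4) for each norm-bounded $A$ and $\varepsilon>0$ there is $\delta>0$ with $\sup_i|\mu_i(s_{|\mathcal I_i})-\mu_i(s^0_{|\mathcal I_i})|\le\varepsilon$ whenever $s^0\in A$, $\|s-s^0\|\le\delta$. $\Gamma_i(s):=\mu_i([\gamma_{ij}(s_j)]_{j\in\mathcal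 I_i})$ (argument zero outside $\mathcal I_i$). $\mathcal N^-_i(n)$: vertices $j$ with a directed path from $j$ to $i$ of length at most $n$ ($\mathcal N^-_i(0)=\{i\}$). $\Sigma(\Gamma)$ is the system $s^{n+1}=\Gamma(s^n)$; it is GATT if $\|\Gamma^n(s)\|\to0$ for every $s\in\ell^\infty_+(\mathcal I)$. Uniform NJI condition: for all $r,\varepsilon>0$ there are $n\in\mathbb N$, $\delta>0$ such that for all $s\in\ell^\infty_+(\mathcal I)$, $i\in\mathcal I$ with $s_i\ge\varepsilon$ and $\|s\|\le r$ there is $j\in\mathcal N^-_i(n)$ with $s_j\ge\delta$ and $\Gamma_j(s)<s_j$. *)

From HB Require Import structures.
From mathcomp Require Import all_boot all_order all_algebra.
From mathcomp Require Import all_classical all_reals all_analysis.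
Set Implicit Arguments. Unset Strict Implicit. Unset Printing Implicit Defensive.
Import Order.TTheory GRing.Theory Num.Theory.
Import numFieldNormedType.Exports.
Local Open Scope classical_set_scope.
Local Open Scope ring_scope.

Definition is_lplus {R : realType} {I : Type} (s : I -> R) : Prop :=
  (forall i, 0 <= s i) /\ exists M : R, forall i, s i <= M.

Definition linf_norm {R : realType} {I : Type} (s : I -> R) : R :=
  sup (range (fun i => `|s i|)).

Definition restr {R : realType} {I : Type} (J : set I) (s : I -> R) : I -> R :=
  fun i => if `[< J i >] then s i else 0.

(* class K_oo (functions R_+ -> R_+, modelled as R -> R, constrained on [0,oo)) *)
Definition Kinf {R : realType} (g : R -> R) : Prop :=
  [/\ g 0 = 0,
      {within [set x : R | 0 <= x], continuous g},
      (forall x y, 0 <= x -> x < y -> g x < g y) &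
      (forall M : R, exists x, 0 <= x /\ M < g x)].

Definition gainvec {R : realType} {I : Type} (Ii : I -> set I)
  (gam : I -> I -> R -> R) (i : I) (s : I -> R) : I -> R :=
  fun j => if `[< Ii i j >] then gam i j (s j) else 0.

(* Gamma_i(s) := mu_i([gamma_ij(s_j)]_{j in I_i}); finite by (M3) *)
Definition Gam {R : realType} {I : Type} (Ii : I -> set I)
  (gam : I -> I -> R -> R) (mu : I -> (I -> R) -> \bar R) (s : I -> R) : I -> R :=
  fun i => fine (mu i (gainvec Ii gam i s)).

Record gain_operator {R : realType} {I : Type} (Ii : I -> set I)
  (gam : I -> I -> R -> R) (mu : I -> (I -> R) -> \bar R) : Prop := {
  go_fin : forall i, finite_set (Ii i) /\ ~ Ii i i;
  go_Kinf : forall i j, Ii i j -> Kinf (gam i j);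
  go_equicont : forall r : R, 0 <= r -> forall e : R, 0 < e ->
     exists d : R, 0 < d /\ forall i j, Ii i j -> forall x : R, 0 <= x ->
       `|x - r| < d -> `|gam i j x - gam i j r| < e;
  go_M1 : exists xi : R -> R, Kinf xi /\ forall i,
     mu i (fun _ => 0) = 0%E /\
     forall s, is_lplus s -> ((xi (linf_norm s))%:E <= mu i s)%E;
  go_M2 : forall i s s', is_lplus s -> is_lplus s' ->
     (forall j, s j <= s' j) -> (mu i s <= mu i s')%E;
  go_M3 : forall i (J : set I), finite_set J ->
     forall s, is_lplus s -> (forall j, ~ J j -> s j = 0) ->
       mu i s \is a fin_num /\
       forall e : R, 0 < e -> exists d : R, 0 < d /\
         forall s', is_lplus s' -> (forall j, ~ J j -> s' j = 0) ->
           linf_norm (fun j => s' j - s j) < d ->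
           `|fine (mu i s') - fine (mu i s)| < e;
  go_M4 : forall A : set (I -> R), A `<=` [set s | is_lplus s] ->
     (exists r : R, forall s0, A s0 -> linf_norm s0 <= r) ->
     forall e : R, 0 < e -> exists d : R, 0 < d /\
       forall s0 s, A s0 -> is_lplus s -> linf_norm (fun j => s j - s0 j) <= d ->
       forall i, (`|mu i (restr (Ii i) s) - mu i (restr (Ii i) s0)| <= e%:E)%E
}.

(* N^-_i(n): vertices j with a directed path j -> ... -> i of length <= n;
   edge j -> k iff j \in I_k *)
Fixpoint Nin {I : Type} (Ii : I -> set I) (n : nat) (i : I) : set I :=
  match n with
  | O => [set i]
  | S m => Nin Ii m i `|` [set j | exists k, Nin Ii m i k /\ Ii k j]
  end.

Definition GATT {R : realType} {I : Type} (G : (I -> R) -> (I -> R)) : Prop :=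
  forall s, is_lplus s -> (fun n : nat => linf_norm (iter n G s)) @ \oo --> (0 : R).

Definition uniform_NJI {R : realType} {I : Type} (Ii : I -> set I)
  (G : (I -> R) -> (I -> R)) : Prop :=
  forall r eps : R, 0 < r -> 0 < eps ->
  exists (n : nat) (delta : R), 0 < delta /\
    forall s, is_lplus s -> forall i, eps <= s i -> linf_norm s <= r ->
      exists j, Nin Ii n i j /\ delta <= s j /\ G s j < s j.

From mathcomp Require Import all_boot all_order all_algebra.
From mathcomp Require Import all_classical all_reals all_analysis.
From mathcomp Require Import lra.
Set Implicit Arguments. Unset Strict Implicit. Unset Printing Implicit Defensive.
Import Order.TTheory GRing.Theory Num.Theory.
Import numFieldNormedType.Exports.
Local Open Scope classical_set_scope.
Local Open Scope ring_scope.

(* Suppose that inside N^-_i(n + m) the operator Gamma decreases no coordinate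
   [s_j >= delta] of some [s <= r]. Then Gamma^m(s) >= s - e on N^-_i(n), with
   [delta] depending only on [r], [m] and [e]: induct on [m], using that Gamma_j
   reads only the in-neighbours of [j], one step further out, and that Gamma is
   monotone and uniformly continuous on bounded sets (by (M4) and the uniform
   equicontinuity of the gains on compact intervals). For [n = 0], [m = N],
   [e = eps / 2] and [s_i >= eps] this gives Gamma^N(s)_i >= eps / 2, whereas
   monotonicity bounds Gamma^N(s)_i by ||Gamma^N(r 1)||, which GATT makes
   smaller than [eps / 2] for [N] large. *)

Lemma compact_uniform_equicontinuity (R : realType) (T : Type) (P : set T)
    (F : T -> R -> R) (D K : set R) :
  compact K -> K `<=` D ->
  (forall r, D r -> forall e : R, 0 < e -> exists2 d : R, 0 < d &
     forall t, P t -> forall x, D x -> `|x - r| < d -> `|F t x - F t r| < e) ->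
  forall e : R, 0 < e -> exists2 d : R, 0 < d &
     forall t, P t -> forall x y, K x -> D y -> `|x - y| < d -> `|F t x - F t y| < e.
Proof.
move=> cK KD Feq e e0.
pose Q (d x : R) := D x -> forall t, P t -> forall y, D y -> `|x - y| < d ->
  `|F t x - F t y| < e.
have : \forall d \near 0^'+, K `<=` Q d.
  apply: (compact_near_coveringP K).1 => // x Kx.
  have e2 : 0 < e / 2 by rewrite divr_gt0.
  have [dx dx0 Hx] := Feq x (KD x Kx) (e / 2) e2.
  near=> x' d.
  have xx' : `|x - x'| < dx / 2.
    near: x'; apply: cvgr_dist_lt; [exact: cvg_id | by rewrite divr_gt0].
  have dsmall : d < dx / 2 by near: d; apply: nbhs_right_lt; rewrite divr_gt0.
  move=> /= Dx' t Pt y Dy x'y.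
  have x'x : `|x' - x| < dx.
    by rewrite distrC (lt_le_trans xx') // ler_pdivrMr // ler_peMr ?ler1n ?ltW.
  have yx : `|y - x| < dx.
    rewrite (splitr dx); apply: le_lt_trans (ler_distD x' y x) _.
    by rewrite distrC ltrD // ?(lt_trans x'y) // distrC.
  apply: le_lt_trans (ler_distD (F t x) _ _) _.
  by rewrite (splitr e); apply: ltrD; [|rewrite distrC]; exact: Hx.
move=> KQ; near (0 : R)^'+ => d.
exists d => [|t Pt x y Kx Dy]; first by near: d; exact: nbhs_right_gt.
by apply: (near KQ d) => //; exact: KD.
Unshelve. all: by end_near.
Qed.

Lemma finite_set_ub (R : realType) (T : Type) (S : set T) (f : T -> R) :
  finite_set S -> exists M, forall j, S j -> f j <= M.
Proof.
move=> /(finite_image f)/finite_compact/compact_bounded[M [_ HM]].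
exists (M + 1) => j Sj; apply: le_trans (ler_norm _) _.
by apply: HM; [rewrite ltrDl | exists j].
Qed.

Lemma bounded_of_unit_increments (R : realType) (h b : R) : 0 < h -> 0 <= b ->
  exists2 N : R, 0 <= N & forall f : R -> R, f 0 <= 0 ->
    (forall x y : R, 0 <= y -> y <= x -> x <= b -> x - y <= h -> f x <= f y + 1) ->
    forall x : R, 0 <= x -> x <= b -> f x <= N.
Proof.
move=> h0 b0; exists (Num.Def.archi_bound (b / h))%:R => // f f0 finc.
have steps n x : 0 <= x -> x <= b -> x <= n%:R * h -> f x <= n%:R.
  elim: n x => [|n IH] x x0 xb; first by rewrite mul0r => x_le0; have -> : x = 0 by lra.
  rewrite -natr1 mulrDl mul1r => xn.
  pose y := Num.max (x - h) 0.
  have y0 : 0 <= y by rewrite le_max lexx orbT.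
  have xhy : x - h <= y by rewrite le_max lexx.
  have yx : y <= x by rewrite ge_max x0 andbT; lra.
  apply: le_trans (finc x y y0 yx xb _) _; first lra.
  rewrite lerD2r IH //; first exact: le_trans yx xb.
  by rewrite ge_max; apply/andP; split; [lra | rewrite mulr_ge0 // ltW].
move=> x x0 xb; apply: steps => //; apply: le_trans xb _.
by rewrite -ler_pdivrMr //; apply/ltW/archi_boundP; rewrite divr_ge0 // ltW.
Qed.

Lemma lplus_le_linf_norm (R : realType) (I : Type) (s : I -> R) j :
  is_lplus s -> s j <= linf_norm s.
Proof.
move=> [s0 [M sM]]; rewrite -[s j]ger0_norm //.
apply: ub_le_sup; last by exists j.
by exists M => _ [k _ <-]; rewrite ger0_norm.
Qed.

Lemma linf_norm_le (R : realType) (I : Type) (s : I -> R) (c : R) :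
  0 <= c -> (forall j, `|s j| <= c) -> linf_norm s <= c.
Proof.
move=> c0 sc; rewrite /linf_norm.
have [-> | /set0P ne] := eqVneq (range (fun j => `|s j|)) set0; first by rewrite sup0.
by apply: ge_sup ne _ => _ [k _ <-].
Qed.

Lemma Nin_le (I : Type) (Ii : I -> set I) n m i :
  (n <= m)%N -> Nin Ii n i `<=` Nin Ii m i.
Proof.
move/subnK <-; elim: (m - n)%N => // k IH j /IH.
by rewrite addSn; left.
Qed.

Lemma Nin_edge (I : Type) (Ii : I -> set I) n i j k :
  Nin Ii n i j -> Ii j k -> Nin Ii n.+1 i k.
Proof. by move=> ij jk; right; exists j. Qed.

Definition nonneg {R : realType} {I : Type} (s : I -> R) := forall i, 0 <= s i.

Section GainOperator.
Variables (R : realType) (I : Type) (Ii : I -> set I)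
  (gam : I -> I -> R -> R) (mu : I -> (I -> R) -> \bar R).
Hypothesis HG : gain_operator Ii gam mu.
Local Notation G := (Gam Ii gam mu).

Lemma gam0 i j : Ii i j -> gam i j 0 = 0.
Proof. by move=> ij; case: (go_Kinf HG ij). Qed.

Lemma gam_le i j (x y : R) : Ii i j -> 0 <= x -> x <= y -> gam i j x <= gam i j y.
Proof.
move=> ij x0; rewrite le_eqVlt => /orP[/eqP -> // | xy].
by case: (go_Kinf HG ij) => _ _ gam_lt _; exact/ltW/gam_lt.
Qed.

Lemma gam_ge0 i j (x : R) : Ii i j -> 0 <= x -> 0 <= gam i j x.
Proof. by move=> ij x0; rewrite -(gam0 ij) gam_le. Qed.

Lemma gainvec_ge0 i x : nonneg x -> nonneg (gainvec Ii gam i x).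
Proof. by move=> x0 j; rewrite /gainvec; case: asboolP => // ij; exact: gam_ge0. Qed.

Lemma gainvec_lplus i x : nonneg x -> is_lplus (gainvec Ii gam i x).
Proof.
move=> x0; split; first exact: gainvec_ge0.
have [M HM] := finite_set_ub (fun j => gam i j (x j)) (go_fin HG i).1.
exists (Num.max M 0) => j; rewrite /gainvec le_max.
by case: asboolP => [/HM -> // | _]; rewrite lexx orbT.
Qed.

Lemma gainvec_fin_num i x : nonneg x -> mu i (gainvec Ii gam i x) \is a fin_num.
Proof.
move=> x0; apply: (go_M3 HG i (go_fin HG i).1 (gainvec_lplus i x0) _).1 => j.
by rewrite /gainvec; case: asboolP.
Qed.

Lemma gainvec_mu_ge0 i x : nonneg x -> (0 <= mu i (gainvec Ii gam i x))%E.
Proof.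
move=> x0; have [xi [_ Hxi]] := go_M1 HG.
rewrite -(Hxi i).1; apply: (go_M2 HG) (gainvec_lplus i x0) _ => //.
- by split=> //; exists 0.
- exact: gainvec_ge0.
Qed.

Lemma Gam_ge0 x i : nonneg x -> 0 <= G x i.
Proof. by move=> x0; apply/fine_ge0/gainvec_mu_ge0. Qed.

Lemma Gam_le x y i : nonneg x -> nonneg y ->
  (forall j, Ii i j -> x j <= y j) -> G x i <= G y i.
Proof.
move=> x0 y0 xy; apply: fine_le; try exact: gainvec_fin_num.
apply: (go_M2 HG); try exact: gainvec_lplus.
by move=> j; rewrite /gainvec; case: asboolP => // ij; rewrite gam_le ?xy.
Qed.

Lemma Gam0 i : G (fun _ => 0) i = 0.
Proof.
rewrite /Gam; have -> : gainvec Ii gam i (fun _ => 0) = (fun _ => 0).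
  by apply: funext => j; rewrite /gainvec; case: asboolP => // /gam0.
by have [xi [_ Hxi]] := go_M1 HG; rewrite (Hxi i).1.
Qed.

Lemma gam_uniform_equicontinuity (b e : R) : 0 < e -> exists2 d : R, 0 < d &
  forall i j, Ii i j -> forall x y, 0 <= x -> x <= b -> 0 <= y ->
  `|x - y| < d -> `|gam i j x - gam i j y| < e.
Proof.
move=> e0.
have [||d d0 Hd] := @compact_uniform_equicontinuity R (I * I) [set ij | Ii ij.1 ij.2]
  (fun ij => gam ij.1 ij.2) [set x | 0 <= x] `[0, b] (@segment_compact R 0 b) _ _ e e0.
- by move=> x; rewrite /= in_itv /= => /andP[].
- move=> r r0 e' e'0; have [d [d0 Hd]] := go_equicont HG r0 e'0.
  by exists d => // [[i j]] /= ij x x0; apply: Hd.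
by exists d => // i j ij x y x0 xb y0; apply: (Hd (i, j)); rewrite //= in_itv /= x0.
Qed.

Lemma gam_ub (b : R) : 0 <= b -> exists2 B : R, 0 <= B & forall i j, Ii i j ->
  forall x : R, 0 <= x -> x <= b -> gam i j x <= B.
Proof.
move=> b0; have [d d0 Hd] := gam_uniform_equicontinuity b (@ltr01 R).
have d2 : 0 < d / 2 by rewrite divr_gt0.
have [N N0 HN] := bounded_of_unit_increments d2 b0.
exists N => // i j ij; apply: HN => [|x y y0 yx xb xy]; first by rewrite gam0.
rewrite -lerBlDl; apply/ltW/(le_lt_trans (ler_norm _))/Hd => //.
  exact: le_trans yx.
by rewrite ger0_norm ?subr_ge0 // (le_lt_trans xy) // ltr_pdivrMr // ltr_pMr // ltr1n.
Qed.

Lemma Gam_uniform_continuity (b e : R) : 0 <= b -> 0 < e -> exists2 c : R, 0 < c &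
  forall i x y, nonneg x -> nonneg y -> (forall j, Ii i j -> x j <= b) ->
  (forall j, Ii i j -> `|x j - y j| <= c) -> `|G x i - G y i| <= e.
Proof.
move=> b0 e0; have [B B0 HB] := gam_ub b0.
pose A := [set w : I -> R | is_lplus w /\ forall j, w j <= B].
have Abd : exists r, forall w, A w -> linf_norm w <= r.
  by exists B => w [[w0 _] wB]; apply: linf_norm_le => // j; rewrite ger0_norm.
have [d [d0 Hd]] := go_M4 HG (fun w (Aw : A w) => Aw.1) Abd e0.
have [c c0 Hc] := gam_uniform_equicontinuity b d0.
exists (c / 2) => [|i x y x0 y0 xb xy]; first by rewrite divr_gt0.
have restr_gainvec z : restr (Ii i) (gainvec Ii gam i z) = gainvec Ii gam i z.
  by apply: funext => j; rewrite /restr /gainvec; case: asboolP.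
have Ax : A (gainvec Ii gam i x).
  split=> [|j]; first exact: gainvec_lplus.
  by rewrite /gainvec; case: asboolP => // ij; rewrite HB ?xb.
have gxy : linf_norm (gainvec Ii gam i y \- gainvec Ii gam i x) <= d.
  apply: linf_norm_le (ltW d0) _ => j; rewrite /gainvec /=.
  case: asboolP => ij; last by rewrite subrr normr0 ltW.
  rewrite distrC; apply/ltW/Hc; rewrite ?xb //; apply: le_lt_trans (xy j ij) _.
  by rewrite ltr_pdivrMr // ltr_pMr // ltr1n.
have := Hd _ _ Ax (gainvec_lplus i y0) gxy i; rewrite !restr_gainvec.
rewrite -(fineK (gainvec_fin_num i x0)) -(fineK (gainvec_fin_num i y0)).
by rewrite -EFinB abse_EFin lee_fin distrC.
Qed.

Lemma Gam_ub (b : R) : 0 <= b -> exists M : R, forall i x, nonneg x ->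
  (forall j, x j <= b) -> G x i <= M.
Proof.
move=> b0; have [c c0 Hc] := Gam_uniform_continuity b0 (@ltr01 R).
have [N _ HN] := bounded_of_unit_increments c0 b0.
exists N => i x x0 xb.
have b_nonneg : nonneg (fun _ : I => b) by move=> j.
apply: le_trans (Gam_le x0 b_nonneg (fun j _ => xb j)) _.
apply: (HN (fun t => G (fun=> t) i)) => // [|u v v0 vu ub uv]; first by rewrite Gam0.
have u0 : 0 <= u := le_trans v0 vu.
rewrite -lerBlDl; apply: le_trans (ler_norm _) (Hc i _ _ _ _ _ _) => // j _.
by rewrite ger0_norm ?subr_ge0.
Qed.

Lemma Gam_lplus x : is_lplus x -> is_lplus (G x).
Proof.
move=> [x0 [M xM]]; split=> [i|]; first exact: Gam_ge0.
have M0 : 0 <= Num.max M 0 by rewrite le_max lexx orbT.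
have [B HB] := Gam_ub M0.
by exists B => i; apply: HB => // j; rewrite le_max xM.
Qed.

Lemma iter_Gam_lplus n x : is_lplus x -> is_lplus (iter n G x).
Proof. by move=> xl; elim: n => //= n; exact: Gam_lplus. Qed.

Lemma iter_Gam_nonneg n x : nonneg x -> nonneg (iter n G x).
Proof. by move=> x0; elim: n => //= n IH i; exact: Gam_ge0. Qed.

Lemma iter_Gam_le n x y : nonneg x -> (forall i, x i <= y i) ->
  forall i, iter n G x i <= iter n G y i.
Proof.
move=> x0 xy; have y0 j : 0 <= y j := le_trans (x0 j) (xy j).
elim: n => //= n IH i; apply: Gam_le => //; exact: iter_Gam_nonneg.
Qed.

Lemma Gam_ge_of_shift_down (b e : R) : 0 <= b -> 0 < e -> exists2 c : R, 0 < c &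
  forall i s y, nonneg s -> nonneg y -> (forall j, s j <= b) ->
  (forall j, Ii i j -> s j - c <= y j) -> G s i - e <= G y i.
Proof.
move=> b0 e0; have [c c0 Hc] := Gam_uniform_continuity b0 e0.
exists c => // i s y s0 y0 sb sy.
pose z j := Num.max (s j - c) 0.
have z0 : nonneg z by move=> j; rewrite le_max lexx orbT.
apply: le_trans (Gam_le z0 y0 _); last by move=> j ij; rewrite ge_max sy ?y0.
rewrite lerBlDl -lerBlDr; apply: le_trans (ler_norm _) (Hc i s z s0 z0 _ _) => // j _.
have := s0 j; rewrite /z /= maxEle ler_norml; by case: (leP (s j - c) 0) => h sj0; lra.
Qed.

Lemma iter_Gam_ge_sub (b : R) m : 0 <= b -> forall e : R, 0 < e ->
  exists2 delta : R, 0 < delta & forall s, nonneg s -> (forall j, s j <= b) ->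
  forall n i, (forall j, Nin Ii (n + m) i j -> delta <= s j -> s j <= G s j) ->
  forall j, Nin Ii n i j -> s j - e <= iter m G s j.
Proof.
move=> b0; elim: m => [|m IH] e e0.
  by exists 1 => // s _ _ n i _ j _ /=; rewrite lerBlDr lerDl ltW.
have [c c0 Hc] := Gam_ge_of_shift_down b0 e0.
have [d d0 Hd] := IH c c0.
exists (Num.min d e) => [|s s0 sb n i Hs j ij]; first by rewrite lt_min d0.
rewrite iterS; have [sj_small | sj_large] := ltP (s j) (Num.min d e).
  apply: le_trans (Gam_ge0 j (iter_Gam_nonneg m s0)).
  by rewrite subr_le0 ltW // (lt_le_trans sj_small) // ge_min lexx orbT.
apply: le_trans (Hc j s _ s0 (iter_Gam_nonneg m s0) sb _).
  by rewrite lerD2r; apply: Hs sj_large; exact: Nin_le (leq_addr _ _) _ ij.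
move=> k jk; apply: Hd (Nin_edge ij jk) => // l; rewrite addSnnS => il dl.
by apply: Hs il (le_trans _ dl); rewrite ge_min lexx.
Qed.

End GainOperator.

Theorem proposition2p19 (R : realType) (I : countType) (Ii : I -> set I)
  (gam : I -> I -> R -> R) (mu : I -> (I -> R) -> \bar R) :
  inhabited I ->
  gain_operator Ii gam mu ->
  GATT (Gam Ii gam mu) ->
  uniform_NJI Ii (Gam Ii gam mu).
Proof.
move=> _ HG Hgatt r eps r0 eps0.
set G := Gam Ii gam mu.
have eps2 : 0 < eps / 2 by rewrite divr_gt0.
have r_lplus : is_lplus (fun _ : I => r) by split=> [_|]; [exact: ltW | exists r].
have [N decayN] : exists N, linf_norm (iter N G (fun=> r)) < eps / 2.
  have /cvgrPdist_lt /(_ _ eps2) [N _ HN] := Hgatt _ r_lplus.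
  by exists N; have := HN N (leqnn N); rewrite sub0r normrN; exact: le_lt_trans (ler_norm _).
have [delta delta0 Hdelta] := iter_Gam_ge_sub HG N (ltW r0) eps2.
exists N, delta; split=> // s s_lplus i epsi s_r.
have [// | no_jump] := pselect (exists j, Nin Ii N i j /\ delta <= s j /\ G s j < s j).
have s0 : nonneg s by case: s_lplus.
have s_le_r j : s j <= r := le_trans (lplus_le_linf_norm j s_lplus) s_r.
have s_nondecr j : Nin Ii (0 + N) i j -> delta <= s j -> s j <= G s j.
  by move=> ij dj; rewrite leNgt; apply/negP => Gj; apply: no_jump; exists j.
have := Hdelta s s0 s_le_r 0%N i s_nondecr i erefl.
have := iter_Gam_le HG N s0 s_le_r i.
have := lplus_le_linf_norm i (iter_Gam_lplus HG N r_lplus).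
lra.
Qed.
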